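(* For every $g\in C^\infty(\mathcal G_H)$ and $z\in\mathbb D_H^\circ$, $$(I_0^H)^\sharp g(z)=\Big(d^{1/2}\,(I_0^E)^\sharp\big[\mu^{-2}\,\tilde g\big]\Big)(\Phi(z)),\qquad \tilde g(\beta,\alpha):=g(\beta,\tan\alpha).$$
   Context: $\mathbb D_H^\circ=\{|z|<1\}$ with Poincaré metric $g_H=c^{-2}|dz|^2$, $c=(1-|z|^2)/2$; $\mathcal G_H=\mathbb S^1_\beta\times\mathbb R_a$, $\gamma_{\beta,a}(t)=e^{i\beta}\frac{(2+ia)\tanh(t/2)+ia}{ia\tanh(t/2)-2+ia}$ (unit-speed geodesics). $(I_0^H)^\sharp g(z)=\int_{S_z\mathbb D_H}g(\pi_H(z,w))\,dS_z(w)$, where $\pi_H(z,w)$ is the unique $(\beta,a)$ such that $\gamma_{\beta,a}$ passes through $z$ with velocity $w$, and $dS_z$ is the arclength measure on the $g_H$-unit circle at $z$. $\Phi(z)=\frac{2z}{1+|z|^2}$ maps $\mathbb D_H^\circ$ onto the open Euclidean unit disk; $d(z)=1-|z|^2$. On $(\partial_+S\mathbb D_E)^\circ=\mathbb S^1_\beta\times(-\pi/2,\pi/2)_\alpha$ (point $e^{i\beta}$, direction $e^{i(\beta+\pi+\alpha)}$), $\mu(\beta,\alpha)=\cos\alpha$, and the Euclidean backprojection is $(I_0^E)^\sharp h(y)=\int_0^{2\pi}h(\beta(y,\theta),\alpha(y,\theta))d\theta$ for $y$ in the open disk, where $(\beta(y,\theta),\alpha(y,\theta))$ is the entry point/direction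 of the line through $y$ with direction $e^{i\theta}$ (so $\theta\equiv\beta+\pi+\alpha$). *)

From Stdlib Require Import Reals ZArith ClassicalEpsilon.
From Coquelicot Require Import Coquelicot.
Open Scope R_scope.

Definition cis (t : R) : C := (cos t, sin t).
Definition Rtanh (x : R) : R := (exp x - exp (- x)) / (exp x + exp (- x)).

(* unit-speed geodesics of the Poincare disk *)
Definition gammaH (beta a t : R) : C :=
  (cis beta * ((RtoC 2 + (0, a) ) * RtoC (Rtanh (t / 2)) + (0, a))
     / ((0, a) * RtoC (Rtanh (t / 2)) - RtoC 2 + (0, a)))%C.

Definition passes_through (beta a : R) (z w : C) : Prop :=
  exists t : R, gammaH beta a t = z /\
    is_derive (fun s => fst (gammaH beta a s)) t (fst w) /\
    is_derive (fun s => snd (gammaH beta a s)) t (snd w).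

Definition piH (z w : C) : R * R :=
  epsilon (inhabits (0, 0)) (fun p => passes_through (fst p) (snd p) z w).

(* conformal factor c = (1-|z|^2)/2 ; g_H = c^{-2}|dz|^2 *)
Definition cH (z : C) : R := (1 - (Cmod z) ^ 2) / 2.

(* (I_0^H)^# g (z): integral over the g_H-unit circle {w = c(z) e^{i theta}};
   its g_H-arclength element is d theta. *)
Definition backprojH (g : R -> R -> R) (z : C) : R :=
  RInt (fun theta => let p := piH z (RtoC (cH z) * cis theta)%C in g (fst p) (snd p))
       0 (2 * PI).

(* Euclidean entry data (beta(y,theta), alpha(y,theta)) of the line through y with
   direction e^{i theta}: entry point e^{i beta}, alpha in (-pi/2,pi/2),
   theta = beta + pi + alpha mod 2 pi. *)
Definition entry_data (y : C) (theta : R) (beta alpha : R) : Prop :=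
  - PI / 2 < alpha < PI / 2 /\
  (exists s : R, 0 <= s /\ y = (cis beta + RtoC s * cis theta)%C) /\
  (exists k : Z, theta = beta + PI + alpha + 2 * PI * IZR k).

Definition entryE (y : C) (theta : R) : R * R :=
  epsilon (inhabits (0, 0)) (fun p => entry_data y theta (fst p) (snd p)).

Definition backprojE (h : R -> R -> R) (y : C) : R :=
  RInt (fun theta => let p := entryE y theta in h (fst p) (snd p)) 0 (2 * PI).

Definition mu (beta alpha : R) : R := cos alpha.
Definition dE (y : C) : R := 1 - (Cmod y) ^ 2.
Definition PhiH (z : C) : C := (RtoC (2 / (1 + (Cmod z) ^ 2)) * z)%C.

Definition jcont (f : R -> R -> R) : Prop :=
  forall p : R * R, continuous (fun q : R * R => f (fst q) (snd q)) p.

Fixpoint Ck (k : nat) (f : R -> R -> R) : Prop :=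
  match k with
  | O => jcont f
  | S k' =>
      (forall x y, ex_derive (fun x' => f x' y) x) /\
      (forall x y, ex_derive (fun y' => f x y') y) /\
      Ck k' (fun x y => Derive (fun x' => f x' y) x) /\
      Ck k' (fun x y => Derive (fun y' => f x y') y)
  end.

Definition smooth2 (f : R -> R -> R) : Prop := forall k, Ck k f.

(* g in C^infty(S^1_beta x R_a): smooth on R^2 and 2pi-periodic in beta *)
Definition smooth_on_GH (g : R -> R -> R) : Prop :=
  smooth2 g /\ forall beta a, g (beta + 2 * PI) a = g beta a.

(* Up to the rotation by [cis b], the geodesic [gammaH b a] is an explicit Moebius arc
   [geod a] issuing from [1]. Reading off its position and velocity shows that
   [gammaH b a] passes through [z] with velocity [cH z * v] exactly when
   [cis b * (1 - conj z * v) = z - v] and [a = -2 Im (1 / (1 - conj (cis b) * z))]: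
   [cis b] is the backward endpoint of the geodesic.

   Let [v = cis th]. The Euclidean chord through [PhiH z] joining the two endpoints of
   that geodesic has a direction angle [psi = chord_angle th]; it enters the disk at the
   same point [cis b], and its entry angle [alpha] satisfies [tan alpha = a]. Hence the
   hyperbolic integrand at [th] is the Euclidean one at [psi] times [cos alpha ^ 2], and
   an explicit computation gives [sqrt (dE (PhiH z)) * dpsi/dth = cos alpha ^ 2]. The
   substitution [psi = chord_angle th], which advances by [2 PI] over a period, then
   turns one integral into the other. *)

From Stdlib Require Import Reals ZArith Lra Nsatz ClassicalEpsilon.
From Coquelicot Require Import Coquelicot.
Open Scope R_scope.

Lemma periodic_IZR {A : Type} (f : R -> A) (T : R) :
  (forall x, f (x + T) = f x) -> forall k x, f (x + T * IZR k) = f x.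
Proof.
  intros Hf.
  assert (Hnat : forall n x, f (x + T * INR n) = f x).
  { induction n as [|n IH]; intro x.
    - now rewrite Rmult_0_r, Rplus_0_r.
    - replace (x + T * INR (S n)) with (x + T * INR n + T) by (rewrite S_INR; ring).
      now rewrite Hf. }
  intros [|p|p] x.
  - now rewrite Rmult_0_r, Rplus_0_r.
  - rewrite <- positive_nat_Z, <- INR_IZR_INZ. apply Hnat.
  - rewrite <- (Hnat (Pos.to_nat p)). f_equal.
    rewrite INR_IZR_INZ, positive_nat_Z, <- Pos2Z.opp_pos, opp_IZR. ring.
Qed.

Lemma cos_plus_2PI x : cos (x + 2 * PI) = cos x.
Proof. rewrite cos_plus, cos_2PI, sin_2PI. ring. Qed.

Lemma sin_plus_2PI x : sin (x + 2 * PI) = sin x.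
Proof. rewrite sin_plus, cos_2PI, sin_2PI. ring. Qed.

Lemma cos_sin_eq_shift a b : cos a = cos b -> sin a = sin b ->
  exists k : Z, a = b + 2 * PI * IZR k.
Proof.
  intros Hc Hs.
  assert (Hsd : sin (a - b) = 0) by (rewrite sin_minus, Hc, Hs; ring).
  assert (Hcd : cos (a - b) = 1).
  { rewrite cos_minus, Hc, Hs, <- (sin2_cos2 b). unfold Rsqr. ring. }
  destruct (sin_eq_0_0 _ Hsd) as [k Hk].
  destruct (Zeven_odd_dec k) as [He|Ho].
  - destruct (Zeven_ex _ He) as [j ->]. exists j. rewrite mult_IZR in Hk. lra.
  - destruct (Zodd_ex _ Ho) as [j ->]. exfalso.
    rewrite Hk, plus_IZR, mult_IZR in Hcd.
    replace ((2 * IZR j + 1) * PI) with (PI + 2 * PI * IZR j) in Hcd by ring.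
    rewrite (periodic_IZR cos _ cos_plus_2PI), cos_PI in Hcd. lra.
Qed.

Lemma periodic_cis_eq {A : Type} (f : R -> A) b1 b2 :
  (forall b, f (b + 2 * PI) = f b) -> cis b1 = cis b2 -> f b1 = f b2.
Proof.
  intros Hf Hcis. injection Hcis as Hc Hs.
  destruct (cos_sin_eq_shift _ _ Hc Hs) as [k ->]. apply periodic_IZR, Hf.
Qed.

Lemma Rtanh_exp2 x : Rtanh x = (exp x * exp x - 1) / (exp x * exp x + 1).
Proof.
  unfold Rtanh. rewrite exp_Ropp. assert (H := exp_pos x). field. split; nra.
Qed.

Lemma Rtanh_bound x : -1 < Rtanh x < 1.
Proof.
  rewrite Rtanh_exp2. assert (H := exp_pos x).
  assert (He : 0 < exp x * exp x) by nra.
  split; [apply Rlt_div_r | apply Rlt_div_l]; lra.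
Qed.

Lemma is_derive_Rtanh_half t :
  is_derive (fun s => Rtanh (s / 2)) t ((1 - Rtanh (t / 2) ^ 2) / 2).
Proof.
  unfold Rtanh. auto_derive.
  - assert (H1 := exp_pos (t * / 2)). assert (H2 := exp_pos (- (t * / 2))). lra.
  - unfold Rdiv. rewrite exp_Ropp. assert (H := exp_pos (t * / 2)). field. split; nra.
Qed.

Lemma Rtanh_artanh T : -1 < T < 1 -> Rtanh (ln ((1 + T) / (1 - T)) / 2) = T.
Proof.
  intros HT. rewrite Rtanh_exp2, <- exp_plus.
  replace (ln ((1 + T) / (1 - T)) / 2 + ln ((1 + T) / (1 - T)) / 2)
    with (ln ((1 + T) / (1 - T))) by field.
  rewrite exp_ln by (apply Rdiv_lt_0_compat; lra). field. lra.
Qed.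

Lemma Cmod2_fst_snd (z : C) : Cmod z ^ 2 = fst z * fst z + snd z * snd z.
Proof. rewrite Cmod2_alt. unfold Re, Im. ring. Qed.

Lemma Cmod_lt_1 (z : C) : Cmod z < 1 <-> fst z * fst z + snd z * snd z < 1.
Proof.
  rewrite <- Cmod2_fst_snd. assert (H := Cmod_ge_0 z). split; intro; nra.
Qed.

Lemma cos_sin_sq x : cos x * cos x + sin x * sin x = 1.
Proof. rewrite <- (sin2_cos2 x). unfold Rsqr. ring. Qed.

Lemma Cconj_cis_mul b : (Cconj (cis b) * cis b)%C = 1%C.
Proof.
  unfold Cconj, cis, Cmult, RtoC. cbn [fst snd]. rewrite <- (cos_sin_sq b). f_equal; ring.
Qed.

Lemma Cmod_cis b : Cmod (cis b) = 1.
Proof. unfold Cmod, cis. cbn [fst snd]. rewrite <- sqrt_1, <- (cos_sin_sq b). f_equal. ring. Qed.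

Lemma Cmult_reg_l (c u w : C) : c <> 0%C -> (c * u = c * w)%C -> u = w.
Proof.
  intros Hc H. replace u with (/ c * (c * u))%C by (field; exact Hc).
  rewrite H. field. exact Hc.
Qed.

Lemma cis_neq_0 b : cis b <> 0%C.
Proof. intro H. assert (E := Cmod_cis b). rewrite H, Cmod_0 in E. lra. Qed.

Lemma Cconj_neq_1 (m : C) : Cmod m < 1 -> (1 - Cconj m)%C <> 0%C.
Proof.
  intros Hm H.
  assert (Hc : Cconj m = 1%C) by (replace (Cconj m) with (1 - (1 - Cconj m))%C by ring; rewrite H; ring).
  rewrite <- Cmod_conj, Hc, Cmod_1 in Hm. lra.
Qed.

(** * Geodesics of the Poincare disk *)

(* [gammaH 0 a] written in the parameter [T = tanh (t/2)]: a Moebius arc from [1]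
   (at [T = -1]) whose velocity is [geod_cH a T] times the unit vector [geod_dir a T];
   [geod_cH a T] is also the conformal factor [cH] at the point, i.e. unit speed. *)
Definition geod (a T : R) : C :=
  (((a * (1 + T)) ^ 2 - 4 * T) / (4 + (a * (1 + T)) ^ 2),
   - 2 * (a * (1 + T)) * (1 + T) / (4 + (a * (1 + T)) ^ 2)).

Definition geod_dir (a T : R) : C :=
  (- (4 - (a * (1 + T)) ^ 2) / (4 + (a * (1 + T)) ^ 2),
   - 4 * (a * (1 + T)) / (4 + (a * (1 + T)) ^ 2)).

Definition geod_cH (a T : R) : R := 2 * (1 - T ^ 2) / (4 + (a * (1 + T)) ^ 2).

Lemma geod_den_pos a T : 0 < 4 + (a * (1 + T)) ^ 2.
Proof. assert (H := pow2_ge_0 (a * (1 + T))). lra. Qed.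

Lemma geod_cH_pos a T : -1 < T < 1 -> 0 < geod_cH a T.
Proof.
  intros HT. assert (H := geod_den_pos a T).
  apply Rdiv_lt_0_compat; [nra | lra].
Qed.

Lemma gammaH_geod b a t : gammaH b a t = (cis b * geod a (Rtanh (t / 2)))%C.
Proof.
  unfold gammaH, geod, cis. set (T := Rtanh (t / 2)).
  assert (H := geod_den_pos a T).
  unfold Cdiv, Cmult, Cplus, Cminus, Copp, Cinv, RtoC; simpl.
  f_equal; field; replace (a * (1 + T) * (a * (1 + T))) with ((a * (1 + T)) ^ 2) by ring; lra.
Qed.

Lemma is_derive_geod a T :
  is_derive (fun T => fst (geod a T)) T (4 / (4 + (a * (1 + T)) ^ 2) * fst (geod_dir a T)) /\
  is_derive (fun T => snd (geod a T)) T (4 / (4 + (a * (1 + T)) ^ 2) * snd (geod_dir a T)).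
Proof.
  assert (HA := geod_den_pos a T).
  unfold geod, geod_dir; cbn [fst snd]; split; auto_derive; try lra; field; lra.
Qed.

Lemma is_derive_cis_mul b (u : R -> C) t (du : C) :
  is_derive (fun s => fst (u s)) t (fst du) -> is_derive (fun s => snd (u s)) t (snd du) ->
  is_derive (fun s => fst (cis b * u s)%C) t (fst (cis b * du)%C) /\
  is_derive (fun s => snd (cis b * u s)%C) t (snd (cis b * du)%C).
Proof.
  intros H1 H2. unfold cis, Cmult; cbn [fst snd]. split.
  - apply (is_derive_minus (fun s => cos b * fst (u s)) (fun s => sin b * snd (u s)));
      apply is_derive_scal; assumption.
  - apply (is_derive_plus (fun s => cos b * snd (u s)) (fun s => sin b * fst (u s)));
      apply is_derive_scal; assumption.
Qed.

Lemma is_derive_gammaH b a t (T := Rtanh (t / 2))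
    (v := (RtoC (geod_cH a T) * (cis b * geod_dir a T))%C) :
  is_derive (fun s => fst (gammaH b a s)) t (fst v) /\
  is_derive (fun s => snd (gammaH b a s)) t (snd v).
Proof.
  assert (Hchain : forall (f : R -> R) d,
            is_derive f T (4 / (4 + (a * (1 + T)) ^ 2) * d) ->
            is_derive (fun s => f (Rtanh (s / 2))) t (geod_cH a T * d)).
  { intros f d Hf.
    replace (geod_cH a T * d) with ((1 - T ^ 2) / 2 * (4 / (4 + (a * (1 + T)) ^ 2) * d))
      by (unfold geod_cH; assert (HA := geod_den_pos a T); field; lra).
    exact (is_derive_comp f (fun s => Rtanh (s / 2)) t _ _ Hf (is_derive_Rtanh_half t)). }
  destruct (is_derive_geod a T) as [Hre Him]. apply Hchain in Hre, Him.
  destruct (is_derive_cis_mul b (fun s => geod a (Rtanh (s / 2))) t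
              (RtoC (geod_cH a T) * geod_dir a T)%C) as [D1 D2].
  { unfold RtoC, Cmult; cbn [fst snd]. rewrite Rmult_0_l, Rminus_0_r. exact Hre. }
  { unfold RtoC, Cmult; cbn [fst snd]. rewrite Rmult_0_l, Rplus_0_r. exact Him. }
  replace v with (cis b * (RtoC (geod_cH a T) * geod_dir a T))%C by (subst v; ring).
  split; eapply is_derive_ext; try eassumption; intro s; rewrite gammaH_geod; reflexivity.
Qed.

Lemma passes_through_geod b a z w :
  passes_through b a z w <->
  exists T, -1 < T < 1 /\ z = (cis b * geod a T)%C /\
            w = (RtoC (geod_cH a T) * (cis b * geod_dir a T))%C.
Proof.
  split.
  - intros [t [Hz [Hw1 Hw2]]]. exists (Rtanh (t / 2)).
    destruct (is_derive_gammaH b a t) as [D1 D2].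
    apply is_derive_unique in Hw1, Hw2, D1, D2.
    split; [apply Rtanh_bound|]. split.
    + rewrite <- Hz. apply gammaH_geod.
    + apply injective_projections; congruence.
  - intros [T [HT [-> ->]]]. exists (ln ((1 + T) / (1 - T))).
    destruct (is_derive_gammaH b a (ln ((1 + T) / (1 - T)))) as [D1 D2].
    rewrite Rtanh_artanh in D1, D2 by exact HT.
    split; [|split; assumption].
    rewrite gammaH_geod, Rtanh_artanh by exact HT. reflexivity.
Qed.

Lemma geod_endpoint a T : (1 - Cconj (geod a T) * geod_dir a T = geod a T - geod_dir a T)%C.
Proof.
  assert (HA := geod_den_pos a T).
  unfold geod, geod_dir, Cconj, Cmult, Cminus, Cplus, Copp, RtoC; cbn [fst snd].
  f_equal; field; lra.
Qed.

Lemma geod_param a T : -1 < T -> a = -2 * Im (/ (1 - geod a T))%C.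
Proof.
  intros HT. assert (HA := geod_den_pos a T).
  unfold geod, Cinv, Cminus, Cplus, Copp, RtoC, Im; cbn [fst snd].
  field. split; [lra|].
  replace (4 + (a * (1 + T)) ^ 2 + - ((a * (1 + T)) ^ 2 - 4 * T)) with (4 * (1 + T)) by ring.
  assert (0 < (4 * (1 + T)) ^ 2) by (apply pow_lt; lra).
  assert (H2 := pow2_ge_0 (- (-2 * (a * (1 + T)) * (1 + T)))). lra.
Qed.

Lemma cH_rot_geod b a T : cH (cis b * geod a T)%C = geod_cH a T.
Proof.
  assert (HA := geod_den_pos a T).
  unfold cH. rewrite Cmod_mult, Cmod_cis, Rmult_1_l, Cmod2_fst_snd.
  unfold geod, geod_cH; cbn [fst snd]. field. lra.
Qed.

Lemma geod_onto (m : C) : Cmod m < 1 ->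
  exists T, -1 < T < 1 /\ geod (-2 * Im (/ (1 - m))%C) T = m.
Proof.
  destruct m as [m1 m2]. rewrite Cmod_lt_1; cbn [fst snd]. intros Hm.
  set (n := (1 - m1) * (1 - m1) + m2 * m2).
  assert (Hm1 : m1 < 1) by nra.
  assert (Hn : 0 < n) by (unfold n; nra).
  assert (Ha : -2 * Im (/ (1 - (m1, m2)))%C = -2 * m2 / n).
  { unfold Cinv, Cminus, Cplus, Copp, RtoC, Im; cbn [fst snd].
    replace ((1 + - m1) ^ 2 + (0 + - m2) ^ 2) with n by (unfold n; ring).
    field. exact (Rgt_not_eq _ _ Hn). }
  rewrite Ha. exists (n / (1 - m1) - 1). split.
  - split.
    + assert (0 < n / (1 - m1)) by (apply Rdiv_lt_0_compat; lra). lra.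
    + cut (n / (1 - m1) < 2); [lra|]. apply Rlt_div_l; [lra|]. unfold n. nra.
  - unfold geod.
    replace (-2 * m2 / n * (1 + (n / (1 - m1) - 1))) with (-2 * m2 / (1 - m1)) by (field; lra).
    replace (1 + (n / (1 - m1) - 1)) with (n / (1 - m1)) by ring.
    assert (0 < (1 - m1) ^ 2) by (apply pow_lt; lra).
    assert (H2 := pow2_ge_0 (-2 * m2)).
    unfold n. f_equal; field; split; lra.
Qed.

Lemma endpoint_dir_unique (m p q : C) : Cmod m < 1 ->
  (1 - Cconj m * p = m - p)%C -> (1 - Cconj m * q = m - q)%C -> p = q.
Proof.
  intros Hm Hp Hq. apply (Cmult_reg_l (1 - Cconj m)); [apply Cconj_neq_1, Hm|].
  replace ((1 - Cconj m) * p)%C with ((1 - Cconj m * p) + p - 1)%C by ring.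
  replace ((1 - Cconj m) * q)%C with ((1 - Cconj m * q) + q - 1)%C by ring.
  rewrite Hp, Hq. ring.
Qed.

Lemma passes_through_endpoint b a (z v : C) : Cmod z < 1 ->
  passes_through b a z (RtoC (cH z) * v)%C <->
  (cis b * (1 - Cconj z * v) = z - v)%C /\ a = -2 * Im (/ (1 - Cconj (cis b) * z))%C.
Proof.
  intros Hz.
  assert (Hrot : forall u, (Cconj (cis b) * (cis b * u))%C = u)
    by (intro u; rewrite Cmult_assoc, Cconj_cis_mul; ring).
  assert (Hconj : forall u w, (Cconj (cis b * u) * (cis b * w))%C = (Cconj u * w)%C).
  { intros u w. rewrite Cmult_conj.
    transitivity (Cconj u * w * (Cconj (cis b) * cis b))%C; [ring|].
    rewrite Cconj_cis_mul. ring. }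
  rewrite passes_through_geod. split.
  - intros [T [HT [-> Hv]]]. rewrite cH_rot_geod in Hv.
    apply Cmult_reg_l in Hv.
    2: { intro H. apply (f_equal fst) in H. cbn in H. assert (Hp := geod_cH_pos a T HT). lra. }
    subst v. split.
    + rewrite Hconj, geod_endpoint. ring.
    + rewrite Hrot. apply geod_param. lra.
  - intros [Hend Ha].
    set (m := (Cconj (cis b) * z)%C) in Ha. set (p := (Cconj (cis b) * v)%C).
    assert (Hzm : z = (cis b * m)%C)
      by (unfold m; rewrite Cmult_assoc, (Cmult_comm (cis b)), Cconj_cis_mul; ring).
    assert (Hvp : v = (cis b * p)%C)
      by (unfold p; rewrite Cmult_assoc, (Cmult_comm (cis b)), Cconj_cis_mul; ring).
    assert (Hm : Cmod m < 1) by (unfold m; rewrite Cmod_mult, Cmod_conj, Cmod_cis; lra).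
    clearbody m p. subst z v.
    rewrite Hconj in Hend.
    assert (Hmp : (1 - Cconj m * p = m - p)%C).
    { apply (Cmult_reg_l (cis b)); [apply cis_neq_0|]. rewrite Hend. ring. }
    destruct (geod_onto m Hm) as [T [HT HmT]]. rewrite <- Ha in HmT.
    assert (Hp : p = geod_dir a T).
    { apply (endpoint_dir_unique m); [exact Hm | exact Hmp |].
      rewrite <- HmT. apply geod_endpoint. }
    exists T. rewrite <- HmT, Hp, cH_rot_geod. auto.
Qed.

Lemma piH_spec b a (z v : C) : Cmod z < 1 ->
  passes_through b a z (RtoC (cH z) * v)%C ->
  cis (fst (piH z (RtoC (cH z) * v))) = cis b /\ snd (piH z (RtoC (cH z) * v)) = a.
Proof.
  intros Hz H.
  assert (Hpi := epsilon_spec (inhabits (0, 0))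
                   (fun p => passes_through (fst p) (snd p) z (RtoC (cH z) * v)%C)
                   (ex_intro _ (b, a) H)).
  fold (piH z (RtoC (cH z) * v)%C) in Hpi.
  destruct (piH z (RtoC (cH z) * v)%C) as [b' a']; cbn [fst snd] in *.
  apply passes_through_endpoint in H as [Hend Ha], Hpi as [Hend' Ha']; try exact Hz.
  assert (Hnz : (1 - Cconj z * v)%C <> 0%C).
  { intro H0. rewrite H0, Cmult_0_r in Hend.
    assert (Hv : v = z) by (replace v with (z - (z - v))%C by ring; rewrite <- Hend; ring).
    rewrite Hv, Cmult_comm, <- Cmod2_conj in H0.
    apply (f_equal fst) in H0. unfold Cminus, Cplus, Copp, RtoC in H0. cbn [fst] in H0.
    assert (H1 := Cmod_ge_0 z). nra. }
  assert (Hcis : cis b' = cis b).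
  { apply (Cmult_reg_l (1 - Cconj z * v)); [exact Hnz|].
    rewrite !(Cmult_comm (1 - Cconj z * v)), Hend, Hend'. reflexivity. }
  rewrite Ha, Ha', Hcis. auto.
Qed.

Lemma endpoint_param (z v w : C) : Cmod z < 1 ->
  (w * (1 - Cconj z * v) = z - v)%C ->
  -2 * Im (/ (1 - Cconj w * z))%C = 2 * Im (z * Cconj v)%C / (1 - Cmod z ^ 2).
Proof.
  intros Hz Hw.
  set (r := 1 - Cmod z ^ 2).
  assert (Hr : 0 < r) by (unfold r; assert (H := Cmod_ge_0 z); nra).
  assert (Hwc : (Cconj w * (1 - z * Cconj v) = Cconj z - Cconj v)%C).
  { apply (f_equal Cconj) in Hw.
    rewrite Cmult_conj, !Cminus_conj, Cmult_conj, Cconj_conj in Hw.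
    rewrite <- Hw. f_equal. f_equal. unfold Cconj, RtoC. cbn [fst snd]. f_equal. ring. }
  assert (Hprod : ((1 - Cconj w * z) * (1 - z * Cconj v))%C = RtoC r).
  { unfold r. rewrite RtoC_minus, Cmod2_conj.
    transitivity ((1 - z * Cconj v) - z * (Cconj w * (1 - z * Cconj v)))%C; [ring|].
    rewrite Hwc. ring. }
  assert (Hrnz : RtoC r <> 0%C) by (intro H0; apply (f_equal fst) in H0; cbn in H0; lra).
  assert (HA : (1 - Cconj w * z)%C <> 0%C)
    by (intro H0; rewrite H0, Cmult_0_l in Hprod; auto).
  assert (HB : (1 - z * Cconj v)%C <> 0%C)
    by (intro H0; rewrite H0, Cmult_0_r in Hprod; auto).
  assert (Hinv : (/ (1 - Cconj w * z))%C = ((1 - z * Cconj v) * RtoC (/ r))%C).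
  { rewrite RtoC_inv by lra. rewrite <- Hprod. field. split; assumption. }
  rewrite Hinv, im_scal_r.
  replace (Im (1 - z * Cconj v)) with (- Im (z * Cconj v))
    by (unfold Im, Cminus, Cplus, Copp, RtoC; cbn [snd]; ring).
  field. lra.
Qed.

(** * Lines through a point of the Euclidean disk *)

(* The line through [y] with direction [cis psi] leaves the unit circle backwards at
   [cis (entry_beta y psi)], making the angle [entry_alpha y psi] with the inward
   normal there; [entry_sin y psi] is the signed distance from the line to 0. *)
Definition entry_sin (y : C) (psi : R) : R := snd y * cos psi - fst y * sin psi.
Definition entry_tan (y : C) (psi : R) : R := entry_sin y psi / sqrt (1 - entry_sin y psi ^ 2).
Definition entry_alpha (y : C) (psi : R) : R := atan (entry_tan y psi).
Definition entry_beta (y : C) (psi : R) : R := psi - PI - entry_alpha y psi.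

Section Entry.
Variable y : C.
Hypothesis y_in : Cmod y < 1.

Lemma entry_sin_cos_sq psi :
  entry_sin y psi ^ 2 + (fst y * cos psi + snd y * sin psi) ^ 2 = Cmod y ^ 2.
Proof.
  rewrite Cmod2_fst_snd. unfold entry_sin.
  transitivity ((fst y * fst y + snd y * snd y) * (cos psi * cos psi + sin psi * sin psi)); [ring|].
  rewrite cos_sin_sq. ring.
Qed.

Lemma entry_cos_sq_pos psi : 0 < 1 - entry_sin y psi ^ 2.
Proof.
  assert (H := entry_sin_cos_sq psi). assert (H0 := Cmod_ge_0 y).
  assert (H1 := pow2_ge_0 (fst y * cos psi + snd y * sin psi)). nra.
Qed.

Lemma entry_sin_bound psi : -1 < entry_sin y psi < 1.
Proof. assert (H := entry_cos_sq_pos psi). split; nra. Qed.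

Lemma entry_alpha_asin psi : entry_alpha y psi = asin (entry_sin y psi).
Proof.
  unfold entry_alpha, entry_tan. rewrite asin_atan by apply entry_sin_bound.
  unfold Rsqr. do 3 f_equal. ring.
Qed.

Lemma sin_entry_alpha psi : sin (entry_alpha y psi) = entry_sin y psi.
Proof.
  rewrite entry_alpha_asin. apply sin_asin. assert (H := entry_sin_bound psi). lra.
Qed.

Lemma cos_entry_alpha psi : cos (entry_alpha y psi) = sqrt (1 - entry_sin y psi ^ 2).
Proof.
  rewrite entry_alpha_asin, cos_asin by (assert (H := entry_sin_bound psi); lra).
  unfold Rsqr. do 2 f_equal. ring.
Qed.

Lemma entry_data_entry psi : entry_data y psi (entry_beta y psi) (entry_alpha y psi).
Proof.
  assert (Hs := sin_entry_alpha psi). assert (Hc := cos_entry_alpha psi).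
  assert (HQ : sqrt (1 - entry_sin y psi ^ 2) * sqrt (1 - entry_sin y psi ^ 2)
               = 1 - entry_sin y psi ^ 2) by (apply sqrt_sqrt, Rlt_le, entry_cos_sq_pos).
  assert (HQ0 := sqrt_pos (1 - entry_sin y psi ^ 2)).
  assert (HE := entry_sin_cos_sq psi).
  split; [|split].
  - unfold entry_alpha. apply atan_bound.
  - exists (fst y * cos psi + snd y * sin psi + sqrt (1 - entry_sin y psi ^ 2)). split.
    + assert (H0 := Cmod_ge_0 y). nra.
    + unfold cis, entry_beta, Cplus, Cmult, RtoC. cbn [fst snd].
      replace (psi - PI - entry_alpha y psi) with ((psi - entry_alpha y psi) - PI) by ring.
      rewrite !cos_minus, !sin_minus, cos_PI, sin_PI, Hs, Hc.
      assert (Hcs := cos_sin_sq psi). unfold entry_sin in *.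
      set (Q := sqrt _) in *. clearbody Q. destruct y as [y1 y2]. cbn [fst snd] in *.
      f_equal; nsatz.
  - exists 0%Z. unfold entry_beta. ring.
Qed.

Lemma entry_data_unique psi b al : entry_data y psi b al ->
  al = entry_alpha y psi /\ exists k : Z, b = entry_beta y psi + 2 * PI * IZR k.
Proof.
  intros [Hal [[s [Hs0 Hy]] [k Hk]]].
  assert (Hsin : sin al = entry_sin y psi).
  { unfold entry_sin. rewrite Hy. unfold cis, Cplus, Cmult, RtoC. cbn [fst snd].
    replace ((sin b + (s * sin psi + 0 * cos psi)) * cos psi
             - (cos b + (s * cos psi - 0 * sin psi)) * sin psi)
      with (sin (b - psi)) by (rewrite sin_minus; ring).
    replace (b - psi) with (- (al + PI) + 2 * PI * IZR (- k)) by (rewrite Hk, opp_IZR; ring).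
    rewrite (periodic_IZR sin _ sin_plus_2PI), sin_neg, neg_sin. ring. }
  assert (Hal' : al = entry_alpha y psi).
  { rewrite entry_alpha_asin, <- Hsin, asin_sin; [reflexivity | lra]. }
  split; [exact Hal'|].
  exists (- k)%Z. unfold entry_beta. rewrite <- Hal', Hk, opp_IZR. ring.
Qed.

Lemma entryE_spec psi :
  snd (entryE y psi) = entry_alpha y psi /\
  exists k : Z, fst (entryE y psi) = entry_beta y psi + 2 * PI * IZR k.
Proof.
  apply entry_data_unique.
  apply (epsilon_spec (inhabits (0, 0)) (fun p => entry_data y psi (fst p) (snd p))).
  exists (entry_beta y psi, entry_alpha y psi). apply entry_data_entry.
Qed.

Definition entry_integrand (g : R -> R -> R) (psi : R) : R :=
  / (1 - entry_sin y psi ^ 2) * g (entry_beta y psi) (entry_tan y psi).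

Lemma backprojE_integrand (g : R -> R -> R) psi :
  (forall b a, g (b + 2 * PI) a = g b a) ->
  (let p := entryE y psi in / (mu (fst p) (snd p)) ^ 2 * g (fst p) (tan (snd p)))
  = entry_integrand g psi.
Proof.
  intros Hper. cbv zeta. destruct (entryE_spec psi) as [-> [k ->]].
  unfold mu, entry_integrand, entry_alpha at 2.
  rewrite (periodic_IZR (fun b => g b _) _ (fun b => Hper b _)), cos_entry_alpha,
    pow2_sqrt, tan_atan by apply Rlt_le, entry_cos_sq_pos.
  reflexivity.
Qed.

Lemma chord_integrand_periodic (g : R -> R -> R) psi :
  (forall b a, g (b + 2 * PI) a = g b a) ->
  entry_integrand g (psi + 2 * PI) = entry_integrand g psi.
Proof.
  intros Hper.
  assert (Hs : entry_sin y (psi + 2 * PI) = entry_sin y psi)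
    by (unfold entry_sin; rewrite cos_plus_2PI, sin_plus_2PI; reflexivity).
  unfold entry_integrand, entry_beta, entry_alpha, entry_tan. rewrite !Hs.
  set (al := atan _). replace (psi + 2 * PI - PI - al) with (psi - PI - al + 2 * PI) by ring.
  rewrite Hper. reflexivity.
Qed.

Lemma continuous_chord_integrand (g : R -> R -> R) psi :
  jcont g -> continuous (entry_integrand g) psi.
Proof.
  intros Hg. assert (H := entry_cos_sq_pos psi).
  assert (Hsq : sqrt (1 - entry_sin y psi ^ 2) <> 0) by (apply Rgt_not_eq, sqrt_lt_R0, H).
  unfold entry_sin in H, Hsq.
  assert (C1 : continuous (fun psi => / (1 - entry_sin y psi ^ 2)) psi)
    by (apply (@ex_derive_continuous R_AbsRing R_NormedModule); unfold entry_sin; auto_derive; lra).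
  assert (C2 : continuous (fun psi => g (entry_beta y psi) (entry_tan y psi)) psi).
  { apply (continuous_comp_2 (entry_beta y) (entry_tan y) g); [| |apply Hg];
      apply (@ex_derive_continuous R_AbsRing R_NormedModule);
      unfold entry_beta, entry_alpha, entry_tan, entry_sin; auto_derive; auto. }
  exact (@continuous_mult R_UniformSpace R_AbsRing _ _ psi C1 C2).
Qed.

End Entry.

(** * The Euclidean chord of a hyperbolic geodesic *)

Section ChordOfGeodesic.
Variables x1 x2 : R.
Hypothesis z_in : x1 * x1 + x2 * x2 < 1.
Local Notation r2 := (x1 * x1 + x2 * x2).

Definition zrot_re (th : R) : R := x1 * cos th + x2 * sin th.
Definition zrot_im (th : R) : R := x2 * cos th - x1 * sin th.

(* [(chord_x, chord_y) = cis th - z^2 * Cconj (cis th)] points from the backward to the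
   forward endpoint of the hyperbolic geodesic through [z = (x1, x2)] with direction
   [cis th]; [chord_angle th] is its argument, measured from [th] (and [chord_along > 0]). *)
Definition chord_x (th : R) : R := (1 + r2) * cos th - 2 * zrot_re th * x1.
Definition chord_y (th : R) : R := (1 + r2) * sin th - 2 * zrot_re th * x2.
Definition chord_along (th : R) : R := cos th * chord_x th + sin th * chord_y th.
Definition chord_across (th : R) : R := cos th * chord_y th - sin th * chord_x th.
Definition chord_angle (th : R) : R := th + atan (chord_across th / chord_along th).
Definition chord_len (th : R) : R := sqrt ((1 + r2) * (1 + r2) - 4 * zrot_re th * zrot_re th).
Definition chord_angle_deriv (th : R) : R := (1 - r2 * r2) / (chord_len th * chord_len th).

Lemma zrot_sq th : zrot_re th * zrot_re th + zrot_im th * zrot_im th = r2.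
Proof. assert (H := cos_sin_sq th). unfold zrot_re, zrot_im. nsatz. Qed.

Lemma chord_along_eq th : chord_along th = 1 + r2 - 2 * zrot_re th * zrot_re th.
Proof. assert (H := cos_sin_sq th). unfold chord_along, chord_x, chord_y, zrot_re. nsatz. Qed.

Lemma chord_across_eq th : chord_across th = - 2 * zrot_re th * zrot_im th.
Proof. unfold chord_across, chord_x, chord_y, zrot_im. ring. Qed.

Lemma chord_along_pos th : 0 < chord_along th.
Proof.
  rewrite chord_along_eq. assert (H := zrot_sq th).
  assert (0 <= zrot_im th * zrot_im th) by nra. nra.
Qed.

Lemma chord_radicand_pos th : 0 < (1 + r2) * (1 + r2) - 4 * zrot_re th * zrot_re th.
Proof. assert (H := zrot_sq th). assert (0 <= zrot_im th * zrot_im th) by nra. nra. Qed.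

Lemma chord_len_sq th : chord_len th * chord_len th = (1 + r2) * (1 + r2) - 4 * zrot_re th * zrot_re th.
Proof. apply sqrt_sqrt, Rlt_le, chord_radicand_pos. Qed.

Lemma chord_len_pos th : 0 < chord_len th.
Proof. apply sqrt_lt_R0, chord_radicand_pos. Qed.

Lemma is_derive_zrot th :
  is_derive zrot_re th (zrot_im th) /\ is_derive zrot_im th (- zrot_re th).
Proof. unfold zrot_re, zrot_im. split; auto_derive; auto; ring. Qed.

Lemma is_derive_chord_angle th : is_derive chord_angle th (chord_angle_deriv th).
Proof.
  apply (is_derive_ext (fun t => t + atan ((-2 * zrot_re t * zrot_im t)
                                           / (1 + r2 - 2 * zrot_re t * zrot_re t)))).
  { intro t. unfold chord_angle. rewrite chord_across_eq, chord_along_eq. reflexivity. }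
  destruct (is_derive_zrot th) as [Hp Hq].
  assert (HD := chord_along_pos th). rewrite chord_along_eq in HD.
  assert (HR := chord_radicand_pos th).
  auto_derive; [repeat split; try (eexists; eassumption); lra |].
  replace (Derive (fun x => zrot_re x) th) with (zrot_im th) by (symmetry; apply is_derive_unique, Hp).
  replace (Derive (fun x => zrot_im x) th) with (- zrot_re th) by (symmetry; apply is_derive_unique, Hq).
  unfold chord_angle_deriv. rewrite chord_len_sq.
  rewrite <- (zrot_sq th) in *.
  set (p := zrot_re th) in *. set (q := zrot_im th) in *. clearbody p q.
  field. repeat split; nra.
Qed.

Lemma chord_along_across_sq th :
  chord_along th * chord_along th + chord_across th * chord_across th = chord_len th * chord_len th.
Proof.
  rewrite chord_len_sq, chord_along_eq, chord_across_eq, <- (zrot_sq th). ring.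
Qed.

Lemma cos_sin_chord_angle th :
  cos (chord_angle th) = chord_x th / chord_len th /\
  sin (chord_angle th) = chord_y th / chord_len th.
Proof.
  assert (HD := chord_along_pos th). assert (HL := chord_len_pos th).
  assert (HL2 := chord_along_across_sq th).
  assert (HQ : sqrt (1 + (chord_across th / chord_along th)²) = chord_len th / chord_along th).
  { rewrite <- (sqrt_Rsqr (chord_len th / chord_along th))
      by (apply Rlt_le, Rdiv_lt_0_compat; lra).
    f_equal. unfold Rsqr. field_simplify_eq; lra. }
  assert (Ex : cos th * chord_along th - sin th * chord_across th = chord_x th).
  { unfold chord_along, chord_across.
    transitivity (chord_x th * (cos th * cos th + sin th * sin th)); [ring|].
    rewrite cos_sin_sq. ring. }
  assert (Ey : sin th * chord_along th + cos th * chord_across th = chord_y th).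
  { unfold chord_along, chord_across.
    transitivity (chord_y th * (cos th * cos th + sin th * sin th)); [ring|].
    rewrite cos_sin_sq. ring. }
  unfold chord_angle. rewrite cos_plus, sin_plus, cos_atan, sin_atan, HQ, <- Ex, <- Ey.
  split; field; lra.
Qed.

Definition phiz : C := (2 * x1 / (1 + r2), 2 * x2 / (1 + r2)).

Lemma PhiH_phiz : PhiH (x1, x2) = phiz.
Proof.
  unfold PhiH, phiz. rewrite Cmod2_fst_snd. cbn [fst snd]. assert (0 <= r2) by nra.
  unfold RtoC, Cmult. cbn [fst snd]. f_equal; field; lra.
Qed.

Lemma Cmod_phiz : Cmod phiz < 1.
Proof.
  apply Cmod_lt_1. unfold phiz. cbn [fst snd]. assert (0 <= r2) by nra.
  replace (2 * x1 / (1 + r2) * (2 * x1 / (1 + r2)) + 2 * x2 / (1 + r2) * (2 * x2 / (1 + r2)))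
    with (4 * r2 / ((1 + r2) * (1 + r2))) by (field; lra).
  apply Rlt_div_l; nra.
Qed.

Lemma entry_sin_chord th : entry_sin phiz (chord_angle th) = 2 * zrot_im th / chord_len th.
Proof.
  assert (HL := chord_len_pos th). assert (0 <= r2) by nra.
  destruct (cos_sin_chord_angle th) as [Hc Hs].
  unfold entry_sin, phiz. cbn [fst snd]. rewrite Hc, Hs.
  unfold chord_x, chord_y, zrot_im, zrot_re. field. lra.
Qed.

Lemma entry_cos_sq_chord th :
  1 - entry_sin phiz (chord_angle th) ^ 2 = ((1 - r2) / chord_len th) ^ 2.
Proof.
  rewrite entry_sin_chord. assert (HL := chord_len_pos th). assert (HL2 := chord_len_sq th).
  assert (Hpq := zrot_sq th).
  replace (1 - (2 * zrot_im th / chord_len th) ^ 2)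
    with ((chord_len th * chord_len th - 4 * zrot_im th * zrot_im th) / (chord_len th * chord_len th))
    by (field; lra).
  replace (((1 - r2) / chord_len th) ^ 2) with ((1 - r2) * (1 - r2) / (chord_len th * chord_len th))
    by (field; lra).
  rewrite HL2, <- Hpq. f_equal. ring.
Qed.

Lemma sqrt_entry_cos_sq_chord th :
  sqrt (1 - entry_sin phiz (chord_angle th) ^ 2) = (1 - r2) / chord_len th.
Proof.
  rewrite entry_cos_sq_chord. apply sqrt_pow2.
  assert (HL := chord_len_pos th). apply Rlt_le, Rdiv_lt_0_compat; lra.
Qed.

Lemma entry_tan_chord th : entry_tan phiz (chord_angle th) = 2 * zrot_im th / (1 - r2).
Proof.
  unfold entry_tan. rewrite sqrt_entry_cos_sq_chord, entry_sin_chord.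
  assert (HL := chord_len_pos th). field. lra.
Qed.

Lemma cos_sin_entry_beta_chord th (b := entry_beta phiz (chord_angle th)) :
  cos b * (chord_len th * chord_len th) = - (chord_x th * (1 - r2) + 2 * chord_y th * zrot_im th) /\
  sin b * (chord_len th * chord_len th) = - (chord_y th * (1 - r2) - 2 * chord_x th * zrot_im th).
Proof.
  destruct (cos_sin_chord_angle th) as [Hc Hs]. assert (HL := chord_len_pos th).
  assert (Hsa := sin_entry_alpha phiz Cmod_phiz (chord_angle th)).
  assert (Hca := cos_entry_alpha phiz Cmod_phiz (chord_angle th)).
  rewrite sqrt_entry_cos_sq_chord in Hca. rewrite entry_sin_chord in Hsa.
  subst b. unfold entry_beta.
  replace (chord_angle th - PI - entry_alpha phiz (chord_angle th))
    with ((chord_angle th - entry_alpha phiz (chord_angle th)) - PI) by ring.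
  rewrite !cos_minus, !sin_minus, cos_PI, sin_PI, Hc, Hs, Hsa, Hca.
  split; field; lra.
Qed.

Lemma chord_endpoint th :
  (cis (entry_beta phiz (chord_angle th)) * (1 - Cconj (x1, x2) * cis th))%C = ((x1, x2) - cis th)%C.
Proof.
  destruct (cos_sin_entry_beta_chord th) as [E1 E2].
  assert (HL := chord_len_pos th). assert (HL2 := chord_len_sq th).
  assert (H := cos_sin_sq th).
  unfold cis at 1. set (cb := cos _) in *. set (sb := sin _) in *. clearbody cb sb.
  unfold cis, Cmult, Cminus, Cplus, Copp, Cconj, RtoC. cbn [fst snd].
  unfold chord_x, chord_y, zrot_im, zrot_re in *.
  set (L := chord_len th) in *. clearbody L.
  set (c := cos th) in *. set (s := sin th) in *. clearbody c s.
  assert (HLL : L * L <> 0) by nra.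
  f_equal; apply (Rmult_eq_reg_r (L * L)); try exact HLL; clear - E1 E2 HL2 H; nsatz.
Qed.

Lemma continuous_chord_angle_deriv th : continuous chord_angle_deriv th.
Proof.
  apply (@ex_derive_continuous R_AbsRing R_NormedModule).
  assert (H := chord_radicand_pos th).
  unfold chord_angle_deriv, chord_len, zrot_re in *. auto_derive.
  repeat split; try lra. apply Rgt_not_eq, Rmult_lt_0_compat; apply sqrt_lt_R0; lra.
Qed.

Lemma chord_angle_2PI : chord_angle (2 * PI) = chord_angle 0 + 2 * PI.
Proof.
  unfold chord_angle, chord_across, chord_along, chord_x, chord_y, zrot_re.
  rewrite cos_2PI, sin_2PI, cos_0, sin_0. ring.
Qed.

Lemma chord_jacobian th :
  sqrt (dE phiz) * (chord_angle_deriv th / (1 - entry_sin phiz (chord_angle th) ^ 2)) = 1.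
Proof.
  assert (0 <= r2) by nra. assert (HL := chord_len_pos th).
  assert (Hd : dE phiz = ((1 - r2) / (1 + r2)) ^ 2).
  { unfold dE. rewrite Cmod2_fst_snd. unfold phiz. cbn [fst snd]. field. lra. }
  rewrite Hd, sqrt_pow2 by (apply Rlt_le, Rdiv_lt_0_compat; lra).
  rewrite entry_cos_sq_chord. unfold chord_angle_deriv. field. lra.
Qed.

Lemma piH_chord (g : R -> R -> R) th :
  (forall b a, g (b + 2 * PI) a = g b a) ->
  (let p := piH (x1, x2) (RtoC (cH (x1, x2)) * cis th)%C in g (fst p) (snd p)) =
  g (entry_beta phiz (chord_angle th)) (entry_tan phiz (chord_angle th)).
Proof.
  intros Hper. cbv zeta.
  assert (Hz : Cmod (x1, x2) < 1) by (apply Cmod_lt_1; exact z_in).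
  assert (Hpass : passes_through (entry_beta phiz (chord_angle th))
                    (entry_tan phiz (chord_angle th)) (x1, x2) (RtoC (cH (x1, x2)) * cis th)%C).
  { apply passes_through_endpoint; [exact Hz|]. split; [apply chord_endpoint|].
    rewrite (endpoint_param _ _ _ Hz (chord_endpoint th)), entry_tan_chord, Cmod2_fst_snd.
    unfold cis, Cconj, Cmult, Im, zrot_im; cbn [fst snd]. field. lra. }
  destruct (piH_spec _ _ _ _ Hz Hpass) as [Hb ->].
  apply (periodic_cis_eq (fun b => g b _)); [intro; apply Hper | exact Hb].
Qed.

Lemma backprojH_integrand (g : R -> R -> R) th :
  (forall b a, g (b + 2 * PI) a = g b a) ->
  (let p := piH (x1, x2) (RtoC (cH (x1, x2)) * cis th)%C in g (fst p) (snd p)) =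
  sqrt (dE phiz) * (chord_angle_deriv th * entry_integrand phiz g (chord_angle th)).
Proof.
  intros Hper. rewrite (piH_chord g th Hper). unfold entry_integrand.
  transitivity (sqrt (dE phiz) * (chord_angle_deriv th / (1 - entry_sin phiz (chord_angle th) ^ 2))
                * g (entry_beta phiz (chord_angle th)) (entry_tan phiz (chord_angle th))).
  - rewrite chord_jacobian. ring.
  - unfold Rdiv. ring.
Qed.

End ChordOfGeodesic.

Lemma RInt_periodic_shift (f : R -> R) a T :
  (forall x, continuous f x) -> (forall x, f (x + T) = f x) ->
  RInt f a (a + T) = RInt f 0 T.
Proof.
  intros Hc Hp.
  assert (Ex : forall u w, ex_RInt f u w)
    by (intros u w; apply (@ex_RInt_continuous R_CompleteNormedModule); intros; apply Hc).
  rewrite <- (RInt_Chasles f a 0 (a + T)), <- (RInt_Chasles f 0 T (a + T)) by apply Ex.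
  assert (Etail : RInt f T (a + T) = RInt f 0 a).
  { replace T with (1 * 0 + T) at 1 by ring. replace (a + T) with (1 * a + T) by ring.
    rewrite <- RInt_comp_lin by apply Ex.
    apply RInt_ext. intros x _. change (1 * f (1 * x + T) = f x). rewrite !Rmult_1_l. apply Hp. }
  rewrite Etail, <- (opp_RInt_swap f 0 a) by apply Ex.
  unfold plus, opp; cbn. ring.
Qed.

Theorem theorem3p14 (g : R -> R -> R) (z : C) :
  smooth_on_GH g -> Cmod z < 1 ->
  backprojH g z =
  sqrt (dE (PhiH z)) *
    backprojE (fun beta alpha => / (mu beta alpha) ^ 2 * g beta (tan alpha)) (PhiH z).
Proof.
  intros [Hsmooth Hper] Hz. destruct z as [x1 x2].
  assert (Hz' : x1 * x1 + x2 * x2 < 1) by exact (proj1 (Cmod_lt_1 _) Hz).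
  assert (Hcont : forall psi, continuous (entry_integrand (phiz x1 x2) g) psi)
    by (intro; apply continuous_chord_integrand; [apply Cmod_phiz, Hz' | exact (Hsmooth 0%nat)]).
  unfold backprojE. rewrite PhiH_phiz.
  rewrite (RInt_ext _ (entry_integrand (phiz x1 x2) g))
    by (intros; apply backprojE_integrand; [apply Cmod_phiz, Hz' | exact Hper]).
  unfold backprojH.
  rewrite (RInt_ext _ (fun th => scal (sqrt (dE (phiz x1 x2)))
             (scal (chord_angle_deriv x1 x2 th) (entry_integrand (phiz x1 x2) g (chord_angle x1 x2 th)))))
    by (intros; apply backprojH_integrand; assumption).
  assert (Hsubst := is_RInt_comp (entry_integrand (phiz x1 x2) g)
                      (chord_angle x1 x2) (chord_angle_deriv x1 x2) 0 (2 * PI)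
                      (fun x _ => Hcont _)
                      (fun x _ => conj (is_derive_chord_angle x1 x2 Hz' x)
                                       (continuous_chord_angle_deriv x1 x2 Hz' x))).
  rewrite (RInt_scal _ _ _ _ (ex_intro _ _ Hsubst)), (is_RInt_unique _ _ _ _ Hsubst).
  rewrite chord_angle_2PI, RInt_periodic_shift.
  - reflexivity.
  - exact Hcont.
  - intro; apply chord_integrand_periodic, Hper.
Qed.
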